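(* For $\lambda>0$ let $\zeta_\lambda(z)=\lambda\frac{z}{z+1}e^{-z}$, and consider its restriction $\zeta_\lambda(x)$ to real $x\neq -1$. Let $\lambda^{*}=(\sqrt{2}+1)e^{\sqrt{2}}$. Then: (i) If $0<\lambda<1$, then $\zeta_\lambda$ has a unique nonzero real fixed point $r_\lambda$, it lies in $(-1,0)$ and is repelling, and the fixed point $0$ is attracting. (ii) If $\lambda=1$, then the fixed point $0$ is rationally indifferent. (iii) If $1<\lambda<\lambda^{*}$, then $\zeta_\lambda$ has a unique nonzero real fixed point $a_\lambda$, it lies in $(0,\sqrt{2})$ and is attracting, and the fixed point $0$ is repelling. (iv) If $\lambda=\lambda^{*}$, then $\sqrt{2}$ is a rationally indifferent fixed point and the fixed point $0$ is repelling. (v) If $\lambda>\lambda^{*}$, then the fixed point $0$ is repelling.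
   Context: A fixed point $x_f$ of $\zeta_\lambda$ is called attracting if $|\zeta_\lambda'(x_f)|<1$, repelling if $|\zeta_\lambda'(x_f)|>1$, and rationally indifferent if $\zeta_\lambda'(x_f)$ is a root of unity (here, $|\zeta_\lambda'(x_f)|=1$ with real multiplier). *)

From Stdlib Require Import Reals.
Open Scope R_scope.

Definition zeta (lam x : R) : R := lam * (x / (x + 1)) * exp (- x).

Definition is_fixed (lam x : R) : Prop := x <> -1 /\ zeta lam x = x.

Definition attracting (lam x : R) : Prop :=
  is_fixed lam x /\ exists d, derivable_pt_lim (zeta lam) x d /\ Rabs d < 1.

Definition repelling (lam x : R) : Prop :=
  is_fixed lam x /\ exists d, derivable_pt_lim (zeta lam) x d /\ Rabs d > 1.

Definition rationally_indifferent (lam x : R) : Prop :=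
  is_fixed lam x /\
  exists d, derivable_pt_lim (zeta lam) x d /\ exists n : nat, (0 < n)%nat /\ d ^ n = 1.

Definition lambda_star : R := (sqrt 2 + 1) * exp (sqrt 2).

(* Away from 0, [zeta lam x = x] says exactly [lam = (x + 1) * exp x]. The right-hand side
   increases strictly on (-1, +oo) from 0, through 1 at x = 0 and lambda_star at
   x = sqrt 2, so for 0 < lam < lambda_star there is exactly one nonzero real fixed point,
   found by the intermediate value theorem on (-1, 0) or (0, sqrt 2). At such a point the
   multiplier simplifies to (1 - x (x + 1)) / (x + 1): it exceeds 1 on (-1, 0), lies in
   (-1, 1) on (0, sqrt 2) and equals -1 at sqrt 2. The multiplier at 0 is lam itself. *)

From Stdlib Require Import Reals Lra Lia.
From Coquelicot Require Import Coquelicot.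
Open Scope R_scope.

Definition fixed_level (x : R) : R := (x + 1) * exp x.

Definition fixed_multiplier (x : R) : R := (1 - x * (x + 1)) / (x + 1).

Lemma derivable_pt_lim_zeta lam x : x <> -1 ->
  derivable_pt_lim (zeta lam) x (lam * exp (- x) * (1 - x * (x + 1)) / (x + 1) ^ 2).
Proof.
  intro Hx; assert (Hx1 : x + 1 <> 0) by lra.
  apply is_derive_Reals; unfold zeta.
  auto_derive; [exact Hx1 | field; exact Hx1].
Qed.

Lemma is_fixed0 lam : is_fixed lam 0.
Proof. split; [lra | unfold zeta, Rdiv; ring]. Qed.

Lemma is_fixed_nonzeroE lam x : x <> 0 ->
  is_fixed lam x <-> x <> -1 /\ fixed_level x = lam.
Proof.
  intro Hx0; unfold is_fixed, zeta, fixed_level.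
  assert (Hinv : exp (- x) * exp x = 1) by (rewrite <- exp_plus, Rplus_opp_l; apply exp_0).
  split; intros [Hx1 E]; split; auto.
  - assert (Hnz : x + 1 <> 0) by lra.
    assert (E' : lam * exp (- x) = x + 1).
    { apply (Rmult_eq_reg_l (x / (x + 1))).
      - transitivity (lam * (x / (x + 1)) * exp (- x)); [ring | rewrite E; field; exact Hnz].
      - intro H; apply Hx0; unfold Rdiv in H.
        destruct (Rmult_integral _ _ H) as [H' | H']; auto.
        exfalso; exact (Rinv_neq_0_compat _ Hnz H'). }
    rewrite <- E'; replace lam with (lam * (exp (- x) * exp x)) at 2 by (rewrite Hinv; ring).
    ring.
  - rewrite <- E; replace (x / (x + 1)) with (x * / (x + 1)) by reflexivity.
    replace ((x + 1) * exp x * (x * / (x + 1)) * exp (- x))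
      with (x * ((x + 1) * / (x + 1)) * (exp (- x) * exp x)) by ring.
    rewrite Hinv, Rinv_r by lra; ring.
Qed.

Lemma fixed_level_lt x y : -1 < x -> x < y -> fixed_level x < fixed_level y.
Proof.
  intros Hx Hxy; unfold fixed_level.
  pose proof (exp_increasing _ _ Hxy); pose proof (exp_pos x); nra.
Qed.

Lemma fixed_level_pos_inv x : 0 < fixed_level x -> -1 < x.
Proof.
  unfold fixed_level; intro H; pose proof (exp_pos x).
  destruct (Rle_lt_dec x (-1)); [nra | lra].
Qed.

Lemma fixed_level_inj lam x y : 0 < lam ->
  fixed_level x = lam -> fixed_level y = lam -> x = y.
Proof.
  intros Hlam Ex Ey.
  assert (Hx : -1 < x) by (apply fixed_level_pos_inv; lra).
  assert (Hy : -1 < y) by (apply fixed_level_pos_inv; lra).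
  destruct (Rtotal_order x y) as [h | [h | h]]; auto.
  - pose proof (fixed_level_lt x y Hx h); lra.
  - pose proof (fixed_level_lt y x Hy h); lra.
Qed.

Lemma fixed_level_IVT lam a b : a < b ->
  fixed_level a < lam < fixed_level b -> exists r, a < r < b /\ fixed_level r = lam.
Proof.
  intros Hab [Ha Hb].
  destruct (IVT (fun x => fixed_level x - lam) a b) as [r [[Har Hrb] Er]];
    unfold fixed_level in *; [reg | exact Hab | lra | lra |].
  exists r; split; [split | lra].
  - destruct (Req_dec a r) as [e | e]; [subst; lra | lra].
  - destruct (Req_dec r b) as [e | e]; [subst; lra | lra].
Qed.

Lemma fixed_level0 : fixed_level 0 = 1.
Proof. unfold fixed_level; rewrite exp_0; ring. Qed.

Lemma fixed_level_neg1 : fixed_level (-1) = 0.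
Proof. unfold fixed_level; ring. Qed.

Lemma fixed_level_sqrt2 : fixed_level (sqrt 2) = lambda_star.
Proof. unfold fixed_level, lambda_star; ring. Qed.

Lemma one_lt_lambda_star : 1 < lambda_star.
Proof.
  rewrite <- fixed_level0, <- fixed_level_sqrt2.
  apply fixed_level_lt; [lra | apply sqrt_lt_R0; lra].
Qed.

Lemma unique_nonzero_fixed_between lam a b : 0 < lam -> a < b ->
  (0 <= a \/ b <= 0) -> fixed_level a < lam < fixed_level b ->
  exists r, a < r < b /\ is_fixed lam r /\ r <> 0 /\
    forall y, is_fixed lam y -> y <> 0 -> y = r.
Proof.
  intros Hlam Hab Hsign Hlev.
  destruct (fixed_level_IVT lam a b Hab Hlev) as [r [Hr Er]].
  assert (Hr1 : -1 < r) by (apply fixed_level_pos_inv; lra).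
  assert (Hr0 : r <> 0) by lra.
  exists r; split; [exact Hr | split; [apply is_fixed_nonzeroE; auto; lra | split; [exact Hr0 |]]].
  intros y Hy Hy0; apply is_fixed_nonzeroE in Hy as [_ Ey]; auto.
  exact (fixed_level_inj lam y r Hlam Ey Er).
Qed.

Lemma derivable_pt_lim_zeta_fixed lam x : x <> 0 -> is_fixed lam x ->
  derivable_pt_lim (zeta lam) x (fixed_multiplier x).
Proof.
  intros Hx0 Hfix; pose proof (proj1 (is_fixed_nonzeroE lam x Hx0) Hfix) as [Hx1 E].
  assert (Hnz : x + 1 <> 0) by lra.
  replace (fixed_multiplier x)
    with (lam * exp (- x) * (1 - x * (x + 1)) / (x + 1) ^ 2).
  - exact (derivable_pt_lim_zeta lam x Hx1).
  - unfold fixed_multiplier; rewrite <- E; unfold fixed_level; rewrite exp_Ropp.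
    field; split; [exact Hnz | apply Rgt_not_eq, exp_pos].
Qed.

Lemma derivable_pt_lim_zeta0 lam : derivable_pt_lim (zeta lam) 0 lam.
Proof.
  replace lam with (lam * exp (- 0) * (1 - 0 * (0 + 1)) / (0 + 1) ^ 2) at 2.
  - apply derivable_pt_lim_zeta; lra.
  - rewrite Ropp_0, exp_0; field.
Qed.

Lemma fixed_multiplier_gt1 x : -1 < x < 0 -> 1 < fixed_multiplier x.
Proof.
  intro Hx; unfold fixed_multiplier.
  apply (Rmult_lt_reg_r (x + 1)); [lra |].
  unfold Rdiv; rewrite Rmult_assoc, Rinv_l by lra; nra.
Qed.

Lemma fixed_multiplier_lt1 x : 0 < x < sqrt 2 -> Rabs (fixed_multiplier x) < 1.
Proof.
  intro Hx; unfold fixed_multiplier.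
  assert (x * x < 2).
  { rewrite <- (sqrt_sqrt 2) by lra; apply Rmult_le_0_lt_compat; lra. }
  apply Rabs_def1; apply (Rmult_lt_reg_r (x + 1)); try lra;
    unfold Rdiv; rewrite Rmult_assoc, Rinv_l by lra; nra.
Qed.

Lemma fixed_multiplier_sqrt2 : fixed_multiplier (sqrt 2) = -1.
Proof.
  pose proof (sqrt_lt_R0 2 ltac:(lra)); pose proof (sqrt_sqrt 2 ltac:(lra)).
  unfold fixed_multiplier; field_simplify_eq; [nra | lra].
Qed.

Lemma repelling_neg_fixed lam x : -1 < x < 0 -> is_fixed lam x -> repelling lam x.
Proof.
  intros Hx Hfix; split; [exact Hfix |].
  exists (fixed_multiplier x); split; [apply derivable_pt_lim_zeta_fixed; auto; lra |].
  pose proof (fixed_multiplier_gt1 x Hx); rewrite Rabs_right; lra.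
Qed.

Lemma attracting_pos_fixed lam x : 0 < x < sqrt 2 -> is_fixed lam x -> attracting lam x.
Proof.
  intros Hx Hfix; split; [exact Hfix |].
  exists (fixed_multiplier x); split; [apply derivable_pt_lim_zeta_fixed; auto; lra |].
  exact (fixed_multiplier_lt1 x Hx).
Qed.

Lemma rationally_indifferent_lambda_star_sqrt2 :
  rationally_indifferent lambda_star (sqrt 2).
Proof.
  assert (Hsqrt2 : 0 < sqrt 2) by (apply sqrt_lt_R0; lra).
  assert (Hfix : is_fixed lambda_star (sqrt 2))
    by (apply is_fixed_nonzeroE; [lra | split; [lra | apply fixed_level_sqrt2]]).
  split; [exact Hfix |].
  exists (fixed_multiplier (sqrt 2)); split; [apply derivable_pt_lim_zeta_fixed; auto; lra |].
  exists 2%nat; split; [lia | rewrite fixed_multiplier_sqrt2; ring].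
Qed.

Lemma repelling_fixed0 lam : 1 < lam -> repelling lam 0.
Proof.
  intro Hlam; split; [apply is_fixed0 |].
  exists lam; split; [apply derivable_pt_lim_zeta0 | rewrite Rabs_right; lra].
Qed.

Lemma attracting_fixed0 lam : 0 < lam < 1 -> attracting lam 0.
Proof.
  intro Hlam; split; [apply is_fixed0 |].
  exists lam; split; [apply derivable_pt_lim_zeta0 | rewrite Rabs_right; lra].
Qed.

Theorem theorem3 :
  (forall lam, 0 < lam < 1 ->
     (exists r, is_fixed lam r /\ r <> 0 /\
        (forall y, is_fixed lam y -> y <> 0 -> y = r) /\
        -1 < r < 0 /\ repelling lam r) /\
     attracting lam 0) /\
  rationally_indifferent 1 0 /\
  (forall lam, 1 < lam < lambda_star ->
     (exists a, is_fixed lam a /\ a <> 0 /\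
        (forall y, is_fixed lam y -> y <> 0 -> y = a) /\
        0 < a < sqrt 2 /\ attracting lam a) /\
     repelling lam 0) /\
  (rationally_indifferent lambda_star (sqrt 2) /\ repelling lambda_star 0) /\
  (forall lam, lam > lambda_star -> repelling lam 0).
Proof.
  pose proof one_lt_lambda_star as Hstar.
  split; [| split; [| split; [| split]]].
  - intros lam Hlam; split; [| exact (attracting_fixed0 lam Hlam)].
    assert (Hlev : fixed_level (-1) < lam < fixed_level 0)
      by (rewrite fixed_level_neg1, fixed_level0; lra).
    destruct (unique_nonzero_fixed_between lam (-1) 0 ltac:(lra) ltac:(lra)
                (or_intror (Rle_refl 0)) Hlev) as [r [Hr [Hfix [Hr0 Huniq]]]].
    exists r; do 4 (split; auto).
    exact (repelling_neg_fixed lam r Hr Hfix).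
  - split; [apply is_fixed0 |].
    exists 1; split; [apply derivable_pt_lim_zeta0 | exists 1%nat; split; [lia | ring]].
  - intros lam Hlam; split; [| apply repelling_fixed0; lra].
    assert (Hlev : fixed_level 0 < lam < fixed_level (sqrt 2))
      by (rewrite fixed_level0, fixed_level_sqrt2; lra).
    destruct (unique_nonzero_fixed_between lam 0 (sqrt 2) ltac:(lra)
                (sqrt_lt_R0 2 ltac:(lra)) (or_introl (Rle_refl 0)) Hlev)
      as [a [Ha [Hfix [Ha0 Huniq]]]].
    exists a; do 4 (split; auto).
    exact (attracting_pos_fixed lam a Ha Hfix).
  - split; [exact rationally_indifferent_lambda_star_sqrt2 | apply repelling_fixed0; lra].
  - intros lam Hlam; apply repelling_fixed0; lra.
Qed.
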